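(* Let $U\in C^\infty(\mathbb{R}^{2d})$ be real and satisfy Hypothesis (U), with associated symplectomorphism $\Phi$. An operator $W\in\mathbb{B}(\mathcal S(\mathbb{R}^d);\mathcal S'(\mathbb{R}^d))$ is of the form $\mathfrak{Op}^A_\Phi(a)$ with $a\in S^{-\infty}(\mathbb{R}^d)$ if and only if there exists $b\in S^{-\infty}(\mathbb{R}^d)$ with $W=b^A(x,D)$.
   Context: Notation: $\langle\xi\rangle=(1+|\xi|^2)^{1/2}$, $\bar d\eta=(2\pi)^{-d}d\eta$. $S^m(\mathbb{R}^d)$: $a\in C^\infty(\mathbb{R}^{2d})$ with $|\partial_x^\alpha\partial_\xi^\beta a|\le C_{\alpha\beta}\langle\xi\rangle^{m-|\beta|}$; $S^{-\infty}=\bigcap_mS^m$. $S^+$: smooth $f$ with $\partial_{x_j}f\in S^1$, $\partial_{\xi_j}f\in S^0$. Hypothesis (U): $U(x,\eta)=\langle x,\eta\rangle+d(x,\eta)$, $d\in S^+$ real, $\|(\partial_{x_j}\partial_{\eta_k}d)\|\le\delta<1$ everywhere; $\Phi(\nabla_\eta U(x,\eta),\eta)=(x,\nabla_xU(x,\eta))$. Magnetic field $B=\frac12\sum B_{jk}dx_j\wedge dx_k$ closed, real $B_{jk}=-B_{kj}\in BC^\infty$; $A$ real 1-form with smooth polynomially bounded coefficients, $dA=B$; $\omega^A(x,y)=\exp\{-i\int_{[x,y]}A\}$ (line integral along the segment $x\to y$). $[b^A(x,D)u](x)=\iint e^{i\langle x-y,\eta\rangle}\omega^A(x,y)b(x,\eta)u(y)dy\,\bar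 d\eta$; $[\mathfrak{Op}^A_\Phi(a)u](x)=\iint e^{i(U(x,\eta)-\langle y,\eta\rangle)}\omega^A(x,y)a(x,\eta)u(y)dy\,\bar d\eta$. *)

From HB Require Import structures.
From mathcomp Require Import all_boot all_order all_algebra.
From mathcomp Require Import all_classical all_reals all_analysis.
From mathcomp Require Import complex.
Set Implicit Arguments. Unset Strict Implicit. Unset Printing Implicit Defensive.
Import Order.TTheory GRing.Theory Num.Theory.
Import numFieldNormedType.Exports.
Local Open Scope classical_set_scope.
Local Open Scope ring_scope.
Local Open Scope complex_scope.

Section PseudoDiff.
Variable R : realType.

Definition cmod (z : R[i]) : R := Num.sqrt (complex.Re z ^+ 2 + complex.Im z ^+ 2).
Definition cexpi (t : R) : R[i] := cos t +i* sin t.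

Definition dotR (n : nat) (x y : 'rV[R]_n) : R := \sum_(i < n) x 0 i * y 0 i.
Definition jb (n : nat) (x : 'rV[R]_n) : R := Num.sqrt (1 + dotR x x).
Definition eucl (n : nat) (v : 'cV[R]_n) : R := Num.sqrt (\sum_(i < n) v i 0 ^+ 2).
Definition ev (n : nat) (j : 'I_n) : 'rV[R]_n := delta_mx 0 j.

Definition dlist (V : normedModType R) (vs : seq V) (f : V -> R) : V -> R :=
  foldr (fun v g => fun z => 'D_v g z) f vs.
Definition smooth (V : normedModType R) (f : V -> R) : Prop :=
  forall (vs : seq V) (z : V), differentiable (dlist vs f) z.

Definition mpart1 (n : nat) (al : 'I_n -> nat) (f : 'rV[R]_n -> R) : 'rV[R]_n -> R :=
  dlist (flatten [seq nseq (al j) (ev j) | j <- enum 'I_n]) f.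

Definition ps (n : nat) := ('rV[R]_n * 'rV[R]_n)%type.
Definition dx (n : nat) (j : 'I_n) : ps n := (ev j, 0).
Definition dxi (n : nat) (k : 'I_n) : ps n := (0, ev k).
Definition mpart (n : nat) (al be : 'I_n -> nat) (f : ps n -> R) : ps n -> R :=
  dlist (flatten [seq nseq (al j) (dx j) | j <- enum 'I_n]
         ++ flatten [seq nseq (be k) (dxi k) | k <- enum 'I_n]) f.
Definition mlen (n : nat) (be : 'I_n -> nat) : nat := \sum_(k < n) be k.

Definition symbR (n : nat) (m : R) (a : ps n -> R) : Prop :=
  smooth a /\
  forall al be : 'I_n -> nat, exists C : R, forall z : ps n,
    `|mpart al be a z| <= C * jb z.2 `^ (m - (mlen be)%:R).

Definition symbC (n : nat) (m : R) (a : ps n -> R[i]) : Prop :=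
  smooth (fun z => complex.Re (a z)) /\ smooth (fun z => complex.Im (a z)) /\
  forall al be : 'I_n -> nat, exists C : R, forall z : ps n,
    cmod (mpart al be (fun w => complex.Re (a w)) z +i* mpart al be (fun w => complex.Im (a w)) z)
      <= C * jb z.2 `^ (m - (mlen be)%:R).

Definition Sminf (n : nat) (a : ps n -> R[i]) : Prop := forall m : R, symbC m a.

Definition Splus (n : nat) (f : ps n -> R) : Prop :=
  smooth f /\
  (forall j : 'I_n, symbR 1 (fun z => 'D_(dx j) f z)) /\
  (forall j : 'I_n, symbR 0 (fun z => 'D_(dxi j) f z)).

Definition hypU (n : nat) (U : ps n -> R) : Prop :=
  exists dd : ps n -> R,
    (forall z : ps n, U z = dotR z.1 z.2 + dd z) /\ Splus dd /\
    exists delta : R, delta < 1 /\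
      forall (z : ps n) (v : 'cV[R]_n),
        eucl ((\matrix_(j < n, k < n) 'D_(dx j) (fun w => 'D_(dxi k) dd w) z) *m v)
          <= delta * eucl v.

Definition grad_x (n : nat) (U : ps n -> R) (z : ps n) : 'rV[R]_n :=
  \row_(j < n) 'D_(dx j) U z.
Definition grad_xi (n : nat) (U : ps n -> R) (z : ps n) : 'rV[R]_n :=
  \row_(k < n) 'D_(dxi k) U z.

Definition assoc_Phi (n : nat) (U : ps n -> R) (Phi : ps n -> ps n) : Prop :=
  forall (x xi : 'rV[R]_n),
    Phi (grad_xi U (x, xi), xi) = (x, grad_x U (x, xi)).

Definition magB (n : nat) (A : 'I_n -> 'rV[R]_n -> R) (j k : 'I_n) : 'rV[R]_n -> R :=
  fun x => 'D_(ev j) (A k) x - 'D_(ev k) (A j) x.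

Definition magnetic_pot (n : nat) (A : 'I_n -> 'rV[R]_n -> R) : Prop :=
  (forall j : 'I_n, smooth (A j) /\
     exists (C : R) (N : nat), forall x, `|A j x| <= C * jb x ^+ N) /\
  (forall j k : 'I_n, smooth (magB A j k) /\
     forall al : 'I_n -> nat, exists C : R, forall x, `|mpart1 al (magB A j k) x| <= C).

Definition line_int (n : nat) (A : 'I_n -> 'rV[R]_n -> R) (x y : 'rV[R]_n) : R :=
  Rintegral (@lebesgue_measure R) `[0%R, 1%R]
    (fun t : R => \sum_(j < n) A j (x + t *: (y - x)) * (y 0 j - x 0 j)).

Definition omegaA (n : nat) (A : 'I_n -> 'rV[R]_n -> R) (x y : 'rV[R]_n) : R[i] :=
  cexpi (- line_int A x y).

Fixpoint intRn (n : nat) : ('rV[R]_n -> R) -> R :=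
  match n return ('rV[R]_n -> R) -> R with
  | 0 => fun f => f 0
  | n'.+1 => fun f =>
      Rintegral (@lebesgue_measure R) setT
        (fun t : R => intRn (fun v : 'rV[R]_n' => f (row_mx (t%:M : 'rV[R]_1) v)))
  end.
Definition intCn (n : nat) (f : 'rV[R]_n -> R[i]) : R[i] :=
  intRn (fun v => complex.Re (f v)) +i* intRn (fun v => complex.Im (f v)).

Definition schwartz (n : nat) (u : 'rV[R]_n -> R[i]) : Prop :=
  smooth (fun x => complex.Re (u x)) /\ smooth (fun x => complex.Im (u x)) /\
  forall (al : 'I_n -> nat) (N : nat), exists C : R, forall x : 'rV[R]_n,
    jb x ^+ N * cmod (mpart1 al (fun y => complex.Re (u y)) x +i* mpart1 al (fun y => complex.Im (u y)) x)
      <= C.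

Definition magOp (n : nat) (A : 'I_n -> 'rV[R]_n -> R) (b : ps n -> R[i])
    (u : 'rV[R]_n -> R[i]) (x : 'rV[R]_n) : R[i] :=
  ((2 * pi) ^- n)%:C *
  intCn (fun w : 'rV[R]_(n + n) =>
     let y := lsubmx w in let eta := rsubmx w in
     cexpi (dotR (x - y) eta) * omegaA A x y * b (x, eta) * u y).

Definition OpPhiA (n : nat) (U : ps n -> R) (A : 'I_n -> 'rV[R]_n -> R)
    (a : ps n -> R[i]) (u : 'rV[R]_n -> R[i]) (x : 'rV[R]_n) : R[i] :=
  ((2 * pi) ^- n)%:C *
  intCn (fun w : 'rV[R]_(n + n) =>
     let y := lsubmx w in let eta := rsubmx w in
     cexpi (U (x, eta) - dotR y eta) * omegaA A x y * a (x, eta) * u y).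

End PseudoDiff.

(* Hypothesis (U) writes U(x,eta) = <x,eta> + d(x,eta) with d in S^+, so the phase
   of Op^A_Phi(a) is that of b^A(x,D) shifted by d(x,eta): Op^A_Phi(a) = b^A(x,D)
   for b = e^{i d} a, and conversely a = e^{-i d} b.  It remains to see
   that multiplication by e^{i d} preserves S^{-infty}: each first derivative of d
   is O(<eta>), with one more power of <eta> per further derivative, so by the chain
   and Leibniz rules every derivative of order k of e^{i d} is O(<eta>^k), a loss
   that S^{-infty} absorbs.  Derivatives are always taken in the fixed order of the
   multi-index, so the Leibniz induction runs over sorted lists of directions and
   never needs the symmetry of mixed partial derivatives. *)

From HB Require Import structures.
From mathcomp Require Import all_boot all_order all_algebra.
From mathcomp Require Import all_classical all_reals all_analysis.
From mathcomp Require Import complex.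
From mathcomp Require Import ring lra.
Import Order.TTheory GRing.Theory Num.Theory.
Import numFieldNormedType.Exports.
Set Implicit Arguments. Unset Strict Implicit.

Local Open Scope ring_scope.

Section SmoothCalculus.
Variables (R : realType) (V : normedModType R).
Implicit Types (f g : V -> R) (v : V) (s : seq V).

Definition Dfun v f : V -> R := fun z => 'D_v f z.

Lemma dlist_cat s1 s2 f : dlist (s1 ++ s2) f = dlist s1 (dlist s2 f).
Proof. by rewrite /dlist foldr_cat. Qed.

Lemma dlist_rcons s v f : dlist (rcons s v) f = dlist s (Dfun v f).
Proof. by rewrite -cats1 dlist_cat. Qed.

Definition smooth_upto (N : nat) f :=
  forall s, (size s <= N)%N -> forall z, differentiable (dlist s f) z.

Lemma smoothP f : smooth f <-> forall N, smooth_upto N f.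
Proof. by split=> [Hf N s _ //|Hf s z]; apply: (Hf (size s)). Qed.

Lemma smooth_upto_Dfun N v f : smooth_upto N.+1 f -> smooth_upto N (Dfun v f).
Proof. by move=> Hf s Hs z; rewrite -dlist_rcons; apply: Hf; rewrite size_rcons. Qed.

Lemma smooth_upto_le N M f : (M <= N)%N -> smooth_upto N f -> smooth_upto M f.
Proof. by move=> HM Hf s Hs; apply: Hf; apply: leq_trans HM. Qed.

Lemma dlistD s f g :
  (forall t, (size t < size s)%N -> forall z,
      differentiable (dlist t f) z /\ differentiable (dlist t g) z) ->
  dlist s (fun z => f z + g z) = (fun z => dlist s f z + dlist s g z).
Proof.
elim: s => [|v s IH] Hfg //=.
rewrite IH => [|t Ht]; last by apply: Hfg; rewrite /= ltnS ltnW.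
apply/funext => z; have [df dg] := Hfg s (ltnSn _) z.
by rewrite deriveD //; [apply: diff_derivable|apply: diff_derivable].
Qed.

Lemma dlistN s f :
  (forall t, (size t < size s)%N -> forall z, differentiable (dlist t f) z) ->
  dlist s (fun z => - f z) = (fun z => - dlist s f z).
Proof.
elim: s => [|v s IH] Hf //=.
rewrite IH => [|t Ht]; last by apply: Hf; rewrite /= ltnS ltnW.
by apply/funext => z; rewrite deriveN //; apply: diff_derivable; apply: Hf.
Qed.

Lemma DfunM v f g z : differentiable f z -> differentiable g z ->
  Dfun v (fun x => f x * g x) z = Dfun v f z * g z + f z * Dfun v g z.
Proof.
move=> df dg; rewrite /Dfun deriveM; try exact: diff_derivable.
by rewrite /GRing.scale /= addrC mulrC.
Qed.

Lemma smooth_uptoM N f g :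
  smooth_upto N f -> smooth_upto N g -> smooth_upto N (fun z => f z * g z).
Proof.
elim: N f g => [|N IH] f g Hf Hg s Hs z.
  by move: Hs; rewrite leqn0 => /nilP -> /=; apply: differentiableM; [apply: (Hf [::])|apply: (Hg [::])].
case/lastP: s Hs => [_|t v]; first by apply: differentiableM; [apply: (Hf [::])|apply: (Hg [::])].
rewrite size_rcons ltnS => Ht; rewrite dlist_rcons.
have -> : Dfun v (fun x => f x * g x) = (fun x => Dfun v f x * g x + f x * Dfun v g x).
  by apply/funext => x; apply: DfunM; [apply: (Hf [::])|apply: (Hg [::])].
have H1 := IH _ _ (smooth_upto_Dfun v Hf) (smooth_upto_le (leqnSn N) Hg).
have H2 := IH _ _ (smooth_upto_le (leqnSn N) Hf) (smooth_upto_Dfun v Hg).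
rewrite dlistD => [|u Hu x]; first exact: differentiableD (H1 _ Ht z) (H2 _ Ht z).
by split; [apply: H1|apply: H2]; apply: leq_trans (ltnW Hu) Ht.
Qed.

Lemma smoothM f g : smooth f -> smooth g -> smooth (fun z => f z * g z).
Proof. by move=> /smoothP Hf /smoothP Hg; apply/smoothP => N; apply: smooth_uptoM. Qed.

Lemma smoothD f g : smooth f -> smooth g -> smooth (fun z => f z + g z).
Proof. by move=> Hf Hg s z; rewrite dlistD //; apply: differentiableD. Qed.

Lemma smoothN f : smooth f -> smooth (fun z => - f z).
Proof. by move=> Hf s z; rewrite dlistN //; apply: differentiableN. Qed.

Lemma DfunN v f : smooth f -> Dfun v (fun z => - f z) = (fun z => - Dfun v f z).
Proof. by move=> Hf; apply: (@dlistN [:: v]). Qed.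

Lemma smooth_Dfun v f : smooth f -> smooth (Dfun v f).
Proof. by move=> Hf s z; rewrite -dlist_rcons. Qed.

Section RealComposition.
Variables (h h' : R -> R).
Hypothesis h_derive : forall t : R, is_derive t (1 : R) h (h' t).

Lemma differentiable_realcomp f z :
  differentiable f z -> differentiable (fun x => h (f x)) z.
Proof.
move=> df; apply: differentiable_comp => //.
by apply/derivable1_diffP; case: (h_derive (f z)).
Qed.

Lemma Dfun_realcomp v f : smooth f ->
  Dfun v (fun x => h (f x)) = (fun z => h' (f z) * Dfun v f z).
Proof.
move=> Hf; apply/funext => z; have df := Hf [::] z.
have dh : differentiable h (f z) by apply/derivable1_diffP; case: (h_derive (f z)).
rewrite /Dfun (deriveE v); last exact: differentiable_comp.
rewrite diff_comp //= -(deriveE v df).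
set c := 'D_v f z.
have -> : 'd h (f z) c = c * 'd h (f z) 1.
  by rewrite -[in LHS](mulr1 c) -[c * 1]/(c *: (1 : R)) linearZ.
by rewrite -derive1E' // derive1E derive_val mulrC.
Qed.

End RealComposition.

Lemma Dfun_cos v f : smooth f ->
  Dfun v (fun z => cos (f z)) = (fun z => - (sin (f z) * Dfun v f z)).
Proof.
move=> Hf; rewrite (Dfun_realcomp (fun t => is_derive_cos t)) //.
by apply/funext => z; rewrite mulNr.
Qed.

Lemma Dfun_sin v f : smooth f ->
  Dfun v (fun z => sin (f z)) = (fun z => cos (f z) * Dfun v f z).
Proof. exact: (Dfun_realcomp (fun t => is_derive_sin t)). Qed.

Lemma smooth_upto_cos_sin f : smooth f -> forall N,
  smooth_upto N (fun z => cos (f z)) /\ smooth_upto N (fun z => sin (f z)).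
Proof.
move=> Hf; elim => [|N [IHc IHs]].
  split=> s; rewrite leqn0 => /nilP -> z /=.
    exact: (differentiable_realcomp (fun t => is_derive_cos t) (Hf [::] z)).
  exact: (differentiable_realcomp (fun t => is_derive_sin t) (Hf [::] z)).
have HD v : smooth_upto N (Dfun v f) by move/smoothP: (smooth_Dfun v Hf).
split=> s; case/lastP: s => [|t v]; rewrite ?size_rcons ?ltnS => Ht z.
- exact: (differentiable_realcomp (fun t => is_derive_cos t) (Hf [::] z)).
- have P := smooth_uptoM IHs (HD v).
  rewrite dlist_rcons Dfun_cos // dlistN => [|u Hu x]; first exact/differentiableN/P.
  by apply: P; apply: leq_trans (ltnW Hu) Ht.
- exact: (differentiable_realcomp (fun t => is_derive_sin t) (Hf [::] z)).
- by rewrite dlist_rcons Dfun_sin //; apply: (smooth_uptoM IHc (HD v)).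
Qed.

Lemma smooth_cos f : smooth f -> smooth (fun z => cos (f z)).
Proof. by move=> Hf; apply/smoothP => N; case: (smooth_upto_cos_sin Hf N). Qed.

Lemma smooth_sin f : smooth f -> smooth (fun z => sin (f z)).
Proof. by move=> Hf; apply/smoothP => N; case: (smooth_upto_cos_sin Hf N). Qed.

End SmoothCalculus.

Lemma pairwise_flatten_nseq (T : eqType) (F m : T -> nat) (l : seq T) :
  pairwise leq (map F l) -> pairwise leq (flatten [seq nseq (m i) (F i) | i <- l]).
Proof.
elim: l => //= x l IH /andP [Hx Hl].
rewrite pairwise_cat IH // andbT; apply/andP; split.
  apply/allrelP => a b /nseqP [-> _] /flattenP [_ /mapP [y Hy ->] /nseqP [-> _]].
  by apply: (allP Hx); apply: map_f.
by elim: (m x) => //= k ->; rewrite andbT; apply/allP => a /nseqP [-> _].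
Qed.

Section DirectionCodes.
Variable n : nat.
Implicit Types (m al be : 'I_n -> nat) (s : seq nat).
Local Open Scope nat_scope.

(* A multi-index [(al, be)] is encoded as the sorted list of direction codes in
   which [j] (for [d/dx_j]) occurs [al j] times and [n + j] (for [d/dxi_j])
   occurs [be j] times. *)
Definition block_codes m : seq nat := flatten [seq nseq (m j) (val j) | j <- enum 'I_n].

Definition mi_codes al be : seq nat := block_codes al ++ map (addn n) (block_codes be).

Lemma block_codes_pairwise m : pairwise leq (block_codes m).
Proof.
apply: pairwise_flatten_nseq.
by rewrite -(sorted_pairwise leq_trans); have := iota_sorted 0 n; rewrite -val_enum_ord.
Qed.

Lemma block_codes_lt m c : c \in block_codes m -> c < n.
Proof. by move=> /flattenP [t /mapP [j _ ->] /nseqP [-> _]]; apply: ltn_ord. Qed.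

Lemma count_block_codes (F : nat -> nat) x :
  count_mem x (block_codes (fun j => F (val j))) = (x < n) * F x.
Proof.
rewrite /block_codes count_flatten sumnE !big_map.
under eq_bigr => j _ do rewrite count_nseq /=.
case: (ltnP x n) => Hx.
  rewrite (bigD1 (Ordinal Hx)) //= eqxx mul1n big1 ?addn0 // => j Hj.
  by move: Hj; rewrite -(inj_eq val_inj) /= => /negbTE ->.
rewrite mul0n; apply: big1 => j _; case: eqP => // Ej.
by move: (ltn_ord j); rewrite Ej ltnNge Hx.
Qed.

Lemma mi_codes_pairwise al be : pairwise leq (mi_codes al be).
Proof.
rewrite pairwise_cat block_codes_pairwise pairwise_map.
rewrite (sub_pairwise _ (block_codes_pairwise be)) ?andbT => [|a b]; last first.
  by rewrite /= leq_add2l.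
apply/allrelP => a _ /block_codes_lt Ha /mapP [b _ ->].
by rewrite (leq_trans (ltnW Ha)) ?leq_addr.
Qed.

Lemma mi_codes_lt al be : all (fun c => c < n + n) (mi_codes al be).
Proof.
apply/allP => c; rewrite mem_cat => /orP [/block_codes_lt|/mapP [b /block_codes_lt Hb ->]].
  by move=> Hc; rewrite ltn_addr.
by rewrite ltn_add2l.
Qed.

Lemma mi_codes_count s : pairwise leq s -> all (fun c => c < n + n) s ->
  s = mi_codes (fun j => count_mem (val j) s) (fun k => count_mem (n + val k) s).
Proof.
move=> Hs Hlt; apply: (sorted_eq leq_trans anti_leq).
- by rewrite (sorted_pairwise leq_trans).
- by rewrite (sorted_pairwise leq_trans) mi_codes_pairwise.
apply/allP => x _ /=; apply/eqP; rewrite count_cat.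
rewrite (count_block_codes (fun c => count_mem c s)).
case: (ltnP x n) => Hx.
  have -> : count_mem x (map (addn n) (block_codes (fun k => count_mem (n + val k) s))) = 0.
    by apply/count_memPn/mapP => -[b _ Eb]; move: Hx; rewrite Eb ltnNge leq_addr.
  by rewrite mul1n addn0.
rewrite count_map (eq_count (a1 := preim (addn n) (pred1 x)) (a2 := pred1 (x - n))); last first.
  by move=> c; rewrite /= -{1}(subnKC Hx) eqn_add2l.
rewrite (count_block_codes (fun c => count_mem (n + c) s)) mul0n add0n subnKC //.
case: (ltnP (x - n) n) => [|Hxn]; first by rewrite mul1n.
rewrite mul0n; apply/count_memPn/negP => /(allP Hlt).
by rewrite -ltn_subLR // ltnNge Hxn.
Qed.

End DirectionCodes.

Section PhaseSpaceBounds.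
Variables (R : realType) (n : nat).
Local Notation V := (ps R n).
Implicit Types (f g : V -> R) (s : seq nat) (z : V).

Definition dir (c : nat) : V :=
  if (insub c : option 'I_n) is Some j then dx R j
  else if (insub (c - n)%N : option 'I_n) is Some k then dxi R k else 0.

Lemma dir_x (j : 'I_n) : dir (val j) = dx R j.
Proof. by rewrite /dir valK. Qed.

Lemma dir_xi (k : 'I_n) : dir (n + val k)%N = dxi R k.
Proof. by rewrite /dir insubN ?addKn ?valK // -leqNgt leq_addr. Qed.

Definition dcodes s f : V -> R := dlist (map dir s) f.

Lemma dcodes_rcons s c f : dcodes (rcons s c) f = dcodes s (Dfun (dir c) f).
Proof. by rewrite /dcodes map_rcons dlist_rcons. Qed.

Lemma dcodesD s f g : smooth f -> smooth g ->
  dcodes s (fun z => f z + g z) = (fun z => dcodes s f z + dcodes s g z).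
Proof. by move=> Hf Hg; rewrite /dcodes dlistD. Qed.

Lemma dcodesN s f : smooth f -> dcodes s (fun z => - f z) = (fun z => - dcodes s f z).
Proof. by move=> Hf; rewrite /dcodes dlistN. Qed.

Lemma mpart_mi_codes al be f : mpart al be f = dcodes (mi_codes al be) f.
Proof.
rewrite /dcodes /mi_codes /block_codes map_cat -map_comp !map_flatten -!map_comp.
rewrite /mpart -enumT; congr (dlist (flatten _ ++ flatten _) f); apply: eq_map => j /=.
  by rewrite map_nseq dir_x.
by rewrite map_nseq -(dir_xi j).
Qed.

Lemma dcodes_mpart s f : pairwise leq s -> all (fun c => c < n + n)%N s ->
  dcodes s f = mpart (fun j => count_mem (val j) s) (fun k => count_mem (n + val k)%N s) f.
Proof. by move=> Hs Hlt; rewrite mpart_mi_codes -mi_codes_count. Qed.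

Lemma jb_ge1 (x : 'rV[R]_n) : 1 <= jb x.
Proof.
have dot_ge0 : 0 <= dotR x x by apply: sumr_ge0 => i _; rewrite -expr2 sqr_ge0.
by rewrite /jb -{1}sqrtr1 ler_sqrt ?lerDl ?addr_ge0.
Qed.

Lemma jb_gt0 (x : 'rV[R]_n) : 0 < jb x.
Proof. exact: lt_le_trans ltr01 (jb_ge1 x). Qed.

Lemma jb_powR_le (x : 'rV[R]_n) a b : a <= b -> jb x `^ a <= jb x `^ b.
Proof. by move=> ab; apply: ler_powR => //; apply: jb_ge1. Qed.

Lemma jb_powRD (x : 'rV[R]_n) a b : jb x `^ (a + b) = jb x `^ a * jb x `^ b.
Proof. by rewrite powRD // (gt_eqF (jb_gt0 x)) implybT. Qed.

Lemma bound_const_ge0 f (C mu : R) :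
  (forall z, `|f z| <= C * jb z.2 `^ mu) -> 0 <= C.
Proof.
by move=> Hf; have := le_trans (normr_ge0 _) (Hf 0); rewrite pmulr_lge0 // powR_gt0 // jb_gt0.
Qed.

Definition weighted_bound (mu : R) f := exists C : R, forall z, `|f z| <= C * jb z.2 `^ mu.

Lemma weighted_boundM mu1 mu2 f g : weighted_bound mu1 f -> weighted_bound mu2 g ->
  weighted_bound (mu1 + mu2) (fun z => f z * g z).
Proof.
move=> [C1 H1] [C2 H2]; exists (C1 * C2) => z.
by rewrite normrM jb_powRD mulrACA; apply: ler_pM (normr_ge0 _) (normr_ge0 _) (H1 z) (H2 z).
Qed.

(* The bound [w] on the codes lets the Leibniz induction peel off the largest
   code [c] of a sorted list: the remaining codes are all [<= c]. *)
Definition sorted_bound (N : nat) (mu : R) (w : nat) f :=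
  forall s, (size s <= N)%N -> pairwise leq s -> all (fun c => c < w)%N s ->
  weighted_bound (mu + (size s)%:R) (dcodes s f).

Lemma sorted_bound_weighted N mu w f : sorted_bound N mu w f -> weighted_bound mu f.
Proof. by move=> /(_ [::] isT isT isT); rewrite addr0. Qed.

Lemma sorted_bound0 mu w f : weighted_bound mu f -> sorted_bound 0 mu w f.
Proof. by move=> Hf s; rewrite leqn0 => /nilP -> _ _; rewrite addr0. Qed.

Lemma sorted_bound_mono N M mu mu' w w' f : (M <= N)%N -> (w' <= w)%N -> mu <= mu' ->
  sorted_bound N mu w f -> sorted_bound M mu' w' f.
Proof.
move=> HM Hw Hmu Hf s Hs Hp Hlt.
have [|C HC] := Hf s (leq_trans Hs HM) Hp; first by apply: sub_all Hlt => c /leq_trans; apply.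
exists C => z; apply: le_trans (HC z) _.
by apply: ler_wpM2l; [exact: bound_const_ge0 HC|apply: jb_powR_le; rewrite lerD2r].
Qed.

Lemma sorted_bound_Dfun N mu w c f : (c < w)%N ->
  sorted_bound N.+1 mu w f -> sorted_bound N (mu + 1) c.+1 (Dfun (dir c) f).
Proof.
move=> Hc Hf s Hs Hp Hlt.
have [|||C HC] := Hf (rcons s c); first by rewrite size_rcons.
- by rewrite pairwise_rcons Hp andbT; apply: sub_all Hlt => x; rewrite ltnS.
- by rewrite all_rcons Hc; apply: sub_all Hlt => x Hx; apply: leq_trans Hx Hc.
exists C => z; rewrite -dcodes_rcons; apply: le_trans (HC z) _.
by rewrite size_rcons mulrSr addrA addrAC.
Qed.

Lemma sorted_bound_succ N mu w f : weighted_bound mu f ->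
  (forall c, (c < w)%N -> sorted_bound N (mu + 1) c.+1 (Dfun (dir c) f)) ->
  sorted_bound N.+1 mu w f.
Proof.
move=> Hf HD s; case/lastP: s => [|t c] Hs Hp Hlt; first by rewrite addr0.
rewrite size_rcons ltnS in Hs.
move: Hp; rewrite pairwise_rcons => /andP [Htc Ht].
move: Hlt; rewrite all_rcons => /andP [Hc _].
have Htlt : all (fun x => x < c.+1)%N t by apply: sub_all Htc => x; rewrite ltnS.
have [C HC] := HD c Hc t Hs Ht Htlt.
by exists C => z; rewrite dcodes_rcons size_rcons mulrSr addrA addrAC; apply: HC.
Qed.

Lemma sorted_boundD N mu w f g : smooth f -> smooth g ->
  sorted_bound N mu w f -> sorted_bound N mu w g -> sorted_bound N mu w (fun z => f z + g z).
Proof.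
move=> Sf Sg Hf Hg s Hs Hp Hlt.
have [C1 H1] := Hf s Hs Hp Hlt; have [C2 H2] := Hg s Hs Hp Hlt.
exists (C1 + C2) => z; rewrite dcodesD // mulrDl.
exact: le_trans (ler_normD _ _) (lerD (H1 z) (H2 z)).
Qed.

Lemma sorted_boundN N mu w f : smooth f ->
  sorted_bound N mu w f -> sorted_bound N mu w (fun z => - f z).
Proof.
move=> Sf Hf s Hs Hp Hlt; have [C HC] := Hf s Hs Hp Hlt.
by exists C => z; rewrite dcodesN // normrN.
Qed.

Lemma sorted_boundM N w mu1 mu2 f g : smooth f -> smooth g ->
  sorted_bound N mu1 w f -> sorted_bound N mu2 w g ->
  sorted_bound N (mu1 + mu2) w (fun z => f z * g z).
Proof.
elim: N w mu1 mu2 f g => [|N IH] w mu1 mu2 f g Sf Sg Hf Hg.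
  by apply/sorted_bound0/weighted_boundM; apply: sorted_bound_weighted; [exact: Hf|exact: Hg].
apply: sorted_bound_succ => [|c Hc].
  by apply: weighted_boundM; apply: sorted_bound_weighted; [exact: Hf|exact: Hg].
have [Sdf Sdg] := (smooth_Dfun (dir c) Sf, smooth_Dfun (dir c) Sg).
have -> : Dfun (dir c) (fun z => f z * g z) =
    (fun z => Dfun (dir c) f z * g z + f z * Dfun (dir c) g z).
  by apply/funext => z; apply: DfunM; [apply: (Sf [::])|apply: (Sg [::])].
have weaken h mu : sorted_bound N.+1 mu w h -> sorted_bound N mu c.+1 h.
  exact: sorted_bound_mono (leqnSn N) Hc (lexx mu).
apply: sorted_boundD; try exact: smoothM.
  by rewrite addrAC; apply: IH (sorted_bound_Dfun Hc Hf) (weaken _ _ Hg).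
by rewrite -addrA; apply: IH (weaken _ _ Hf) (sorted_bound_Dfun Hc Hg).
Qed.

Lemma cmod_geRe (x y : R) : `|x| <= cmod (x +i* y)%C.
Proof.
rewrite /cmod /= -sqrtr_sqr ler_sqrt ?lerDl ?sqr_ge0 //.
by rewrite addr_ge0 ?sqr_ge0.
Qed.

Lemma cmod_geIm (x y : R) : `|y| <= cmod (x +i* y)%C.
Proof.
rewrite /cmod /= -sqrtr_sqr ler_sqrt ?lerDr ?sqr_ge0 //.
by rewrite addr_ge0 ?sqr_ge0.
Qed.

Lemma cmod_le_normD (x y : R) : cmod (x +i* y)%C <= `|x| + `|y|.
Proof.
have xy_ge0 : 0 <= `|x| + `|y| by rewrite addr_ge0.
rewrite /cmod /= -[X in _ <= X]ger0_norm // -sqrtr_sqr ler_sqrt ?sqr_ge0 //.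
rewrite sqrrD (real_normK (num_real x)) (real_normK (num_real y)).
by rewrite addrAC lerDl mulrn_wge0 // mulr_ge0.
Qed.

Lemma Splus_Dfun_bound d : Splus d ->
  forall c N, (c < n + n)%N -> sorted_bound N 1 (n + n) (Dfun (dir c) d).
Proof.
case=> _ [Hx Hxi] c N Hc s Hs Hp Hlt; rewrite dcodes_mpart //.
set al := fun j : 'I_n => _; set be := fun k : 'I_n => _.
have weaken C m z : 0 <= C -> m <= 1 + (size s)%:R ->
    C * jb z.2 `^ m <= C * jb z.2 `^ (1 + (size s)%:R).
  by move=> C0 Hm; apply: ler_wpM2l => //; apply: jb_powR_le.
have [mlen_ge0 size_ge0] : (0 : R) <= (mlen be)%:R /\ (0 : R) <= (size s)%:R by [].
case: (ltnP c n) => Hcn.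
  have [_ /(_ al be) [C HC]] := Hx (Ordinal Hcn).
  exists C => z; rewrite -(dir_x (Ordinal Hcn)) in HC.
  by apply: le_trans (HC z) (weaken _ _ _ (bound_const_ge0 HC) _); lra.
have Hk : (c - n < n)%N by rewrite ltn_subLR.
have [_ /(_ al be) [C HC]] := Hxi (Ordinal Hk).
exists C => z; rewrite -(dir_xi (Ordinal Hk)) /= subnKC // in HC.
by apply: le_trans (HC z) (weaken _ _ _ (bound_const_ge0 HC) _); lra.
Qed.

Lemma Sminf_sorted_bound a : Sminf a -> forall N mu,
  sorted_bound N mu (n + n) (fun z => complex.Re (a z)) /\
  sorted_bound N mu (n + n) (fun z => complex.Im (a z)).
Proof.
move=> Ha N mu; split=> s Hs Hp Hlt; rewrite dcodes_mpart //;
  set al := fun j : 'I_n => _; set be := fun k : 'I_n => _;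
  have [_ [_ /(_ al be) [C HC]]] := Ha (mu + (size s)%:R + (mlen be)%:R);
  exists C => z; rewrite -[mu + _](addrK (mlen be)%:R).
  exact: le_trans (cmod_geRe _ _) (HC z).
exact: le_trans (cmod_geIm _ _) (HC z).
Qed.

Lemma Sminf_of_sorted_bound b :
  smooth (fun z => complex.Re (b z)) -> smooth (fun z => complex.Im (b z)) ->
  (forall N mu, sorted_bound N mu (n + n) (fun z => complex.Re (b z))) ->
  (forall N mu, sorted_bound N mu (n + n) (fun z => complex.Im (b z))) ->
  Sminf b.
Proof.
move=> SRe SIm HRe HIm m; do 2!split => //; move=> al be.
set s := mi_codes al be; set mu := m - (mlen be)%:R - (size s)%:R.
have [Hp Hlt] := (mi_codes_pairwise al be, mi_codes_lt al be).
have [CR HR] := HRe (size s) mu s (leqnn _) Hp Hlt.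
have [CI HI] := HIm (size s) mu s (leqnn _) Hp Hlt.
exists (CR + CI) => z; rewrite !mpart_mi_codes mulrDl.
apply: le_trans (cmod_le_normD _ _) (lerD _ _).
  by move: (HR z); rewrite /mu subrK.
by move: (HI z); rewrite /mu subrK.
Qed.

Section PhaseFactor.
Variable d : V -> R.
Hypothesis smooth_d : smooth d.
Hypothesis Dfun_d_bound :
  forall c N, (c < n + n)%N -> sorted_bound N 1 (n + n) (Dfun (dir c) d).

Lemma sorted_bound_cos_sin N w : (w <= n + n)%N ->
  sorted_bound N 0 w (fun z => cos (d z)) /\ sorted_bound N 0 w (fun z => sin (d z)).
Proof.
have unit_bound (h : R -> R) : (forall t, `|h t| <= 1) -> weighted_bound 0 (fun z => h (d z)).
  by move=> Hh; exists 1 => z; rewrite powRr0 mul1r.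
have [Sc Ss] := (smooth_cos smooth_d, smooth_sin smooth_d).
elim: N w => [|N IH] w Hw.
  by split; apply: sorted_bound0; apply: unit_bound; [apply: cos_max|apply: sin_max].
have Dd c : (c < w)%N -> sorted_bound N 1 c.+1 (Dfun (dir c) d).
  move=> Hc; have Hcn := leq_trans Hc Hw.
  exact: sorted_bound_mono (leqnn N) Hcn (lexx 1) (Dfun_d_bound Hcn).
have [IHc IHs] := IH _ (leqnn _).
split; apply: sorted_bound_succ.
- exact: unit_bound cos (@cos_max R).
- move=> c Hc; rewrite Dfun_cos // add0r -[1]add0r.
  apply: sorted_boundN; first exact: smoothM Ss (smooth_Dfun _ smooth_d).
  apply: sorted_boundM Ss (smooth_Dfun _ smooth_d) _ (Dd c Hc).
  exact: sorted_bound_mono (leqnn N) (leq_trans Hc Hw) (lexx 0) IHs.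
- exact: unit_bound sin (@sin_max R).
- move=> c Hc; rewrite Dfun_sin // add0r -[1]add0r.
  apply: sorted_boundM Sc (smooth_Dfun _ smooth_d) _ (Dd c Hc).
  exact: sorted_bound_mono (leqnn N) (leq_trans Hc Hw) (lexx 0) IHc.
Qed.

Lemma sorted_bound_rotate f1 f2 : smooth f1 -> smooth f2 ->
  (forall N mu, sorted_bound N mu (n + n) f1) -> (forall N mu, sorted_bound N mu (n + n) f2) ->
  forall N mu, sorted_bound N mu (n + n) (fun z => cos (d z) * f1 z + sin (d z) * f2 z).
Proof.
move=> S1 S2 H1 H2 N mu; have [Hc Hs] := sorted_bound_cos_sin N (leqnn (n + n)).
have [Sc Ss] := (smooth_cos smooth_d, smooth_sin smooth_d).
apply: sorted_boundD; try exact: smoothM; rewrite -[mu]add0r.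
  exact: sorted_boundM Sc S1 Hc (H1 N mu).
exact: sorted_boundM Ss S2 Hs (H2 N mu).
Qed.

Lemma Sminf_cexpiM a : Sminf a -> Sminf (fun z => cexpi (d z) * a z).
Proof.
move=> Ha; have [SRe [SIm _]] := Ha 0.
have [Sc Ss] := (smooth_cos smooth_d, smooth_sin smooth_d).
have BRe N mu := (Sminf_sorted_bound Ha N mu).1.
have BIm N mu := (Sminf_sorted_bound Ha N mu).2.
have ERe : (fun z => complex.Re (cexpi (d z) * a z)) =
    (fun z => cos (d z) * complex.Re (a z) + sin (d z) * - complex.Im (a z)).
  by apply/funext => z; rewrite /cexpi; case: (a z) => p q /=; ring.
have EIm : (fun z => complex.Im (cexpi (d z) * a z)) =
    (fun z => cos (d z) * complex.Im (a z) + sin (d z) * complex.Re (a z)).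
  by apply/funext => z; rewrite /cexpi; case: (a z) => p q /=; ring.
apply: Sminf_of_sorted_bound; rewrite ?ERe ?EIm.
- by apply: smoothD; apply: smoothM => //; apply: smoothN.
- by apply: smoothD; apply: smoothM.
- by apply: sorted_bound_rotate (smoothN SIm) BRe _ => // N mu; apply: sorted_boundN.
- exact: sorted_bound_rotate SIm SRe BIm BRe.
Qed.

End PhaseFactor.

Lemma Sminf_cexpiNM d a : smooth d ->
  (forall c N, (c < n + n)%N -> sorted_bound N 1 (n + n) (Dfun (dir c) d)) ->
  Sminf a -> Sminf (fun z => cexpi (- d z) * a z).
Proof.
move=> Sd Bd; apply: (Sminf_cexpiM (smoothN Sd)) => c N Hc.
by rewrite DfunN //; apply: sorted_boundN (smooth_Dfun _ Sd) (Bd c N Hc).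
Qed.

End PhaseSpaceBounds.

Section PhaseOperators.
Variables (R : realType) (n : nat).

Lemma cexpiD (s t : R) : cexpi (s + t) = cexpi s * cexpi t.
Proof.
rewrite /cexpi cosD sinD; apply/eqP; rewrite eq_complex /=.
by apply/andP; split; apply/eqP; ring.
Qed.

Lemma cexpiNK (t : R) (w : R[i]) : cexpi t * (cexpi (- t) * w) = w.
Proof. by rewrite mulrA -cexpiD subrr /cexpi cos0 sin0 mul1r. Qed.

Lemma dotRBl (x y e : 'rV[R]_n) : dotR (x - y) e = dotR x e - dotR y e.
Proof. by rewrite /dotR -sumrB; apply: eq_bigr => i _; rewrite !mxE mulrBl. Qed.

Lemma OpPhiA_magOp (U d : ps R n -> R) A a u x :
  (forall z, U z = dotR z.1 z.2 + d z) ->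
  OpPhiA U A a u x = magOp A (fun z => cexpi (d z) * a z) u x.
Proof.
move=> HU; rewrite /OpPhiA /magOp; congr (_ * intCn _); apply/funext => w /=.
rewrite HU dotRBl /= addrAC (cexpiD _ (d _)); ring.
Qed.

End PhaseOperators.


Theorem lemma2p9 (R : realType) (n : nat) (U : ps R n -> R)
    (Phi : ps R n -> ps R n) (A : 'I_n -> 'rV[R]_n -> R)
    (W : ('rV[R]_n -> R[i]) -> 'rV[R]_n -> R[i]) :
  hypU U -> assoc_Phi U Phi -> magnetic_pot A ->
  ((exists a : ps R n -> R[i], Sminf a /\
      forall u, schwartz u -> forall x, W u x = OpPhiA U A a u x)
   <->
   (exists b : ps R n -> R[i], Sminf b /\
      forall u, schwartz u -> forall x, W u x = magOp A b u x)).
Proof.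
move=> [d [HU [Spl _]]] _ _.
have Sd : smooth d by case: Spl.
have Bd := Splus_Dfun_bound Spl.
split=> [[a [Ha HW]]|[b [Hb HW]]].
  exists (fun z => cexpi (d z) * a z); split; first exact (Sminf_cexpiM Sd Bd Ha).
  by move=> u Hu x; rewrite HW // (OpPhiA_magOp _ _ _ _ HU).
exists (fun z => cexpi (- d z) * b z); split; first exact (Sminf_cexpiNM Sd Bd Hb).
move=> u Hu x; rewrite HW // (OpPhiA_magOp _ _ _ _ HU).
by congr magOp; apply/funext => z; rewrite cexpiNK.
Qed.
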